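(* Let $n\ge 3$, $0<m<\frac{n-2}{n}$, $m\ne\frac{n-2}{n+2}$, $\beta>0$, $\lambda>0$. Let $v$ be the radially symmetric solution described in the context, $w(s)=r^2v(r)^{1-m}$ with $s=\log r$, and $h(s)=w(s)-\frac{2(n-1)(n-2-nm)}{(1-m)\beta}s$. Then there exists $s_0\in\mathbb{R}$ such that $h_s(s)<0$ for all $s\ge s_0$ if $0<m<\frac{n-2}{n+2}$, and $h_s(s)>0$ for all $s\ge s_0$ if $\frac{n-2}{n+2}<m<\frac{n-2}{n}$.
   Context: $v=v(r)$, $r=|x|$, is the unique radially symmetric positive classical solution of $\frac{n-1}{m}\Delta v^m+\frac{2\beta}{1-m}v+\beta x\cdot\nabla v=0$ in $\mathbb{R}^n$ with $v(0)=\lambda$. *)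

From Stdlib Require Import Reals.
From Coquelicot Require Import Coquelicot.
Open Scope R_scope.

(* The profile v : R -> R of a radially symmetric function V(x) = v(|x|) on R^n,
   extended evenly to all of R.  V is a positive classical (C^2) solution of
     (n-1)/m * Laplacian(V^m) + 2 beta/(1-m) V + beta x . grad V = 0  in R^n
   with V(0) = lambda.  For radial V, Laplacian(V^m)(x) = (v^m)''(r) + (n-1)/r (v^m)'(r)
   and x . grad V(x) = r v'(r), r = |x| > 0; V is C^2 on R^n iff the even profile v
   is C^2 on R. *)
Definition radial_solution (n : nat) (m beta lambda : R) (v : R -> R) : Prop :=
  (forall r, v (- r) = v r) /\
  (forall r, 0 < v r) /\
  (forall r, ex_derive v r) /\
  (forall r, ex_derive (Derive v) r) /\
  (forall r, continuous (Derive (Derive v)) r) /\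
  v 0 = lambda /\
  (forall r, 0 < r ->
     (INR n - 1) / m *
       (Derive (Derive (fun t => Rpower (v t) m)) r
        + (INR n - 1) / r * Derive (fun t => Rpower (v t) m) r)
     + 2 * beta / (1 - m) * v r
     + beta * r * Derive v r = 0).

Definition w_of (m : R) (v : R -> R) (s : R) : R :=
  exp s ^ 2 * Rpower (v (exp s)) (1 - m).

Definition h_of (n : nat) (m beta : R) (v : R -> R) (s : R) : R :=
  w_of m v s
  - 2 * (INR n - 1) * (INR n - 2 - INR n * m) / ((1 - m) * beta) * s.

From Stdlib Require Import Reals Lra Classical.
From Coquelicot Require Import Coquelicot.
Open Scope R_scope.

(* In the variable s = log r, with P := w_s / w, the radial equation becomes the
   planar system
     w_s = w P,   P_s = a + b P - k P^2 - c w P,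
   with k = m/(1-m), c = beta/(n-1), a = 2(n-2-nm)/(1-m) > 0 and
   b = ((n+2)m - (n-2))/(1-m), while h_s = w P - a/c.  Near r = 0 we have
   P ~ 2 > 0, and P can never return to 0 because P_s = a > 0 there; hence w
   increases, and it is unbounded since otherwise P would stay away from 0.  The
   term -c w P then drives P to 0.  Finally
     (w P)_s = -c w (w P - a/c) + w P (b - (k-1) P),
   so at the level w P = a/c the derivative of w P eventually has the sign of b,
   and w P - a/c = h_s eventually takes that sign for good. *)

Lemma continuity_pt_of_is_derive (g : R -> R) x l :
  is_derive g x l -> continuity_pt g x.
Proof.
intros Hg. apply continuity_pt_filterlim.
apply (@ex_derive_continuous R_AbsRing R_NormedModule). now exists l.
Qed.

Lemma locally_gt_of_continuity_pt (g : R -> R) x t :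
  continuity_pt g x -> t < g x ->
  exists d, 0 < d /\ forall y, Rabs (y - x) < d -> t < g y.
Proof.
intros Hg Hgt. destruct (Hg (g x - t)) as [d [Hd Hnear]]; [lra|].
exists d; split; [exact Hd|]. intros y Hy.
destruct (Req_dec y x) as [->|Hne]; [exact Hgt|].
assert (Hclose : Rabs (g y - g x) < g x - t) by (apply Hnear; repeat split; auto).
apply Rabs_lt_between in Hclose. lra.
Qed.

Lemma locally_lt_of_continuity_pt (g : R -> R) x t :
  continuity_pt g x -> g x < t ->
  exists d, 0 < d /\ forall y, Rabs (y - x) < d -> g y < t.
Proof.
intros Hg Hlt.
destruct (locally_gt_of_continuity_pt (fun y => - g y) x (- t)) as [d [Hd Hnear]].
- now apply continuity_pt_opp.
- lra.
- exists d; split; [exact Hd|]. intros y Hy. specialize (Hnear y Hy). lra.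
Qed.

Lemma gt_left_of_derive_neg (g : R -> R) x l :
  is_derive g x l -> l < 0 ->
  exists d, 0 < d /\ forall y, x - d < y < x -> g x < g y.
Proof.
intros Hg Hl.
destruct (proj1 (is_derive_Reals g x l) Hg (- l)) as [[d Hd] Hquot]; [lra|].
exists d; split; [exact Hd|]. intros y Hy.
specialize (Hquot (y - x) ltac:(lra) ltac:(simpl; rewrite Rabs_left; lra)).
replace (x + (y - x)) with y in Hquot by ring.
apply Rabs_lt_between in Hquot.
assert (Hratio : (g y - g x) / (y - x) < 0) by lra.
assert (Hprod : (g y - g x) / (y - x) * (y - x) = g y - g x) by (field; lra).
nra.
Qed.

Lemma left_point_near a x d :
  a < x -> 0 < d -> exists y, a <= y < x /\ Rabs (y - x) < d.
Proof.
intros Hax Hd. exists (Rmax a (x - d / 2)).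
pose proof (Rmax_l a (x - d / 2)). pose proof (Rmax_r a (x - d / 2)).
assert (Rmax a (x - d / 2) < x) by (apply Rmax_lub_lt; lra).
split; [lra|]. rewrite Rabs_left; lra.
Qed.

(* A first crossing of the level [t] after [a] would be a zero of [g - t]
   approached from below, where [g'] cannot be negative. *)
Lemma lt_after_of_derive_neg_at_level (g g' : R -> R) a t :
  (forall x, is_derive g x (g' x)) -> g a < t ->
  (forall x, a <= x -> g x = t -> g' x < 0) ->
  forall x, a <= x -> g x < t.
Proof.
intros Hg Ha Hlevel b Hab. apply Rnot_le_lt. intros Hb.
set (E := fun x => a <= x /\ forall y, a <= y <= x -> g y < t).
assert (HEa : E a) by (split; [lra|]; intros y Hy; now replace y with a by lra).
assert (HEb : is_upper_bound E b).
{ intros x [_ Hx]. apply Rnot_lt_le. intros Hbx. specialize (Hx b ltac:(lra)). lra. }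
destruct (completeness E (ex_intro _ b HEb) (ex_intro _ a HEa)) as [c [Hub Hlub]].
assert (Hbefore : forall y, a <= y < c -> g y < t).
{ intros y Hy. apply NNPP. intros Hny.
  assert (c <= y); [|lra]. apply Hlub. intros x [Hx Hlt].
  apply Rnot_lt_le. intros Hyx. apply Hny, Hlt. lra. }
assert (Hcont : forall x, continuity_pt g x)
  by (intros x; eapply continuity_pt_of_is_derive, Hg).
assert (Hca : a < c).
{ destruct (locally_lt_of_continuity_pt g a t (Hcont a) Ha) as [d [Hd Hnear]].
  assert (a + d / 2 <= c); [|lra]. apply Hub. split; [lra|].
  intros y Hy. apply Hnear. rewrite Rabs_right; lra. }
assert (Hgc : g c = t).
{ destruct (Rtotal_order (g c) t) as [Hlt|[Heq|Hgt]]; [exfalso| exact Heq| exfalso].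
  - destruct (locally_lt_of_continuity_pt g c t (Hcont c) Hlt) as [d [Hd Hnear]].
    assert (c + d / 2 <= c); [|lra]. apply Hub. split; [lra|].
    intros y Hy. destruct (Rlt_le_dec y c); [apply Hbefore; lra|].
    apply Hnear. rewrite Rabs_right; lra.
  - destruct (locally_gt_of_continuity_pt g c t (Hcont c) Hgt) as [d [Hd Hnear]].
    destruct (left_point_near a c d Hca Hd) as [y [Hy Hyc]].
    specialize (Hnear y Hyc). specialize (Hbefore y Hy). lra. }
destruct (gt_left_of_derive_neg g c (g' c) (Hg c)) as [d [Hd Hleft]]; [apply Hlevel; lra|].
destruct (left_point_near a c d Hca Hd) as [y [Hy Hyc]].
rewrite Rabs_left in Hyc by lra.
specialize (Hleft y ltac:(lra)). specialize (Hbefore y Hy). lra.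
Qed.

Lemma gt_after_of_derive_pos_at_level (g g' : R -> R) a t :
  (forall x, is_derive g x (g' x)) -> t < g a ->
  (forall x, a <= x -> g x = t -> 0 < g' x) ->
  forall x, a <= x -> t < g x.
Proof.
intros Hg Ha Hlevel x Hx.
assert (- g x < - t); [|lra].
apply (lt_after_of_derive_neg_at_level (fun y => - g y) (fun y => - g' y) a); [| lra | | exact Hx].
- intros y. apply (is_derive_opp g), Hg.
- intros y Hy Hgy. assert (0 < g' y) by (apply Hlevel; lra). lra.
Qed.

Lemma affine_lower_bound (g g' : R -> R) a K :
  (forall x, is_derive g x (g' x)) -> (forall x, a <= x -> K <= g' x) ->
  forall x, a <= x -> g a + K * (x - a) <= g x.
Proof.
intros Hg HK x Hx. destruct (Req_dec x a) as [->|Hne]; [lra|].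
destruct (MVT_gen g a x g') as [y [Hy Hmvt]].
- intros; apply Hg.
- intros; eapply continuity_pt_of_is_derive, Hg.
- rewrite Rmin_left, Rmax_right in Hy by lra.
  assert (K <= g' y) by (apply HK; lra). nra.
Qed.

Lemma unbounded_of_derive_ge (g g' : R -> R) a K :
  (forall x, is_derive g x (g' x)) -> 0 < K -> (forall x, a <= x -> K <= g' x) ->
  forall M, exists x, a <= x /\ M < g x.
Proof.
intros Hg HK Hge M.
set (x := a + (Rabs (M - g a) + 1) / K).
assert (Hstep : K * (x - a) = Rabs (M - g a) + 1) by (unfold x; field; lra).
assert (Hxa : a <= x).
{ unfold x. assert (0 < (Rabs (M - g a) + 1) / K); [|lra].
  apply Rdiv_lt_0_compat; [pose proof (Rabs_pos (M - g a))|]; lra. }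
exists x; split; [exact Hxa|].
pose proof (affine_lower_bound g g' a K Hg Hge x Hxa).
pose proof (Rle_abs (M - g a)). lra.
Qed.

Lemma eventually_lt_of_derive_neg_at_level (g g' : R -> R) a t :
  (forall x, is_derive g x (g' x)) ->
  (forall x, a <= x -> g x = t -> g' x < 0) ->
  ((forall x, a <= x -> t <= g x) ->
     exists K, 0 < K /\ forall x, a <= x -> g' x <= - K) ->
  exists s0, a <= s0 /\ forall x, s0 <= x -> g x < t.
Proof.
intros Hg Hlevel Hrate.
assert (Hdip : exists s0, a <= s0 /\ g s0 < t).
{ apply NNPP. intros Hnone.
  assert (Habove : forall x, a <= x -> t <= g x).
  { intros x Hx. apply Rnot_lt_le. intros Hlt. apply Hnone. now exists x. }
  destruct (Hrate Habove) as [K [HK Hle]].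
  destruct (unbounded_of_derive_ge (fun x => - g x) (fun x => - g' x) a K) with (M := - t)
    as [x [Hx Hgt]].
  - intros x. apply (is_derive_opp g), Hg.
  - exact HK.
  - intros x Hx. specialize (Hle x Hx). lra.
  - specialize (Habove x Hx). lra. }
destruct Hdip as [s0 [Hs0 Hlt]]. exists s0; split; [exact Hs0|].
apply (lt_after_of_derive_neg_at_level g g' s0 t Hg Hlt).
intros x Hx. apply Hlevel. lra.
Qed.

Lemma quadratic_le_vertex b k p : 0 < k -> b * p - k * p ^ 2 <= b ^ 2 / (4 * k).
Proof.
intros Hk.
assert (Hsq : b ^ 2 / (4 * k) - (b * p - k * p ^ 2) = (2 * k * p - b) ^ 2 / (4 * k))
  by (field; lra).
assert (0 <= (2 * k * p - b) ^ 2 / (4 * k)); [|lra].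
apply Rdiv_le_0_compat; [apply pow2_ge_0|lra].
Qed.

Section LogSlopeSystem.

Variables (W P : R -> R) (a b k c : R).
Hypotheses (a_pos : 0 < a) (k_pos : 0 < k) (c_pos : 0 < c).
Hypothesis W_pos : forall s, 0 < W s.
Hypothesis W_deriv : forall s, is_derive W s (W s * P s).
Let P' s := a + b * P s - k * P s ^ 2 - c * W s * P s.
Hypothesis P_deriv : forall s, is_derive P s (P' s).

Variable s1 : R.
Hypothesis P_s1_pos : 0 < P s1.

Lemma P_pos_after s : s1 <= s -> 0 < P s.
Proof.
apply (gt_after_of_derive_pos_at_level P P' s1 0 P_deriv P_s1_pos).
intros x _ Hx. unfold P'. rewrite Hx. lra.
Qed.

Lemma W_nondecreasing_after x y : s1 <= x -> x <= y -> W x <= W y.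
Proof.
intros Hx Hxy.
assert (W x + 0 * (y - x) <= W y); [|lra].
apply (affine_lower_bound W (fun s => W s * P s)); auto.
intros z Hz. pose proof (W_pos z). pose proof (P_pos_after z ltac:(lra)). nra.
Qed.

(* A bounded [W] keeps [P] away from 0 (at [P = 0] the drift is [a > 0]),
   and then [W' = W P] makes [W] grow linearly. *)
Lemma W_unbounded M : exists s, s1 <= s /\ M < W s.
Proof.
apply NNPP. intros Hnone.
assert (Hbound : forall s, s1 <= s -> W s <= M).
{ intros s Hs. apply Rnot_lt_le. intros Hlt. apply Hnone. now exists s. }
set (q := fun p => a + b * p - k * p ^ 2 - c * M * p).
destruct (locally_gt_of_continuity_pt q 0 0) as [del [Hdel Hq]].
{ unfold q. reg. }
{ unfold q. simpl. lra. }
set (d := Rmin (del / 2) (P s1 / 2)).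
assert (Hd0 : 0 < d) by (apply Rmin_glb_lt; lra).
assert (Hd_del : d <= del / 2) by apply Rmin_l.
assert (Hd_P : d <= P s1 / 2) by apply Rmin_r.
assert (Hqd : 0 < q d) by (apply Hq; rewrite Rminus_0_r, Rabs_right; lra).
assert (HPd : forall s, s1 <= s -> d < P s).
{ apply (gt_after_of_derive_pos_at_level P P' s1 d P_deriv).
  - lra.
  - intros x Hx HPx. unfold P', q in *. rewrite HPx.
    pose proof (Hbound x Hx). assert (c * W x * d <= c * M * d); [|lra].
    apply Rmult_le_compat_r; [lra|]. apply Rmult_le_compat_l; lra. }
destruct (unbounded_of_derive_ge W (fun s => W s * P s) s1 (W s1 * d)) with (M := M)
  as [s [Hs HWs]].
- exact W_deriv.
- pose proof (W_pos s1). nra.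
- intros x Hx. pose proof (W_nondecreasing_after s1 x (Rle_refl _) Hx).
  pose proof (HPd x Hx). pose proof (W_pos s1). nra.
- specialize (Hbound s Hs). lra.
Qed.

(* Once [W >= 2 B / (c eps)], the drift is at most [-B] wherever [P >= eps]. *)
Lemma P_eventually_lt eps : 0 < eps ->
  exists s3, s1 <= s3 /\ forall s, s3 <= s -> P s < eps.
Proof.
intros Heps.
set (B := a + b ^ 2 / (4 * k)).
assert (HB : 0 < B).
{ unfold B. assert (0 <= b ^ 2 / (4 * k)); [|lra].
  apply Rdiv_le_0_compat; [apply pow2_ge_0|lra]. }
destruct (W_unbounded (2 * B / (c * eps))) as [s2 [Hs2 HWs2]].
assert (Hdrift : forall s, s2 <= s -> eps <= P s -> P' s <= - B).
{ intros s Hs HPs. unfold P'.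
  pose proof (quadratic_le_vertex b k (P s) k_pos).
  assert (HWs : 2 * B / (c * eps) <= W s)
    by (pose proof (W_nondecreasing_after s2 s Hs2 Hs); lra).
  assert (Hscale : c * eps * (2 * B / (c * eps)) = 2 * B) by (field; lra).
  assert (c * eps * (2 * B / (c * eps)) <= c * W s * P s); [|unfold B in *; lra].
  assert (0 < 2 * B / (c * eps)) by (apply Rdiv_lt_0_compat; nra).
  assert (2 * B / (c * eps) * eps <= W s * P s) by (apply Rmult_le_compat; lra).
  nra. }
destruct (eventually_lt_of_derive_neg_at_level P P' s2 eps P_deriv) as [s3 [Hs3 HP]].
- intros x Hx HPx. pose proof (Hdrift x Hx ltac:(lra)). lra.
- intros Habove. exists B. split; [exact HB|]. intros x Hx. now apply Hdrift, Habove.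
- exists s3. split; [lra|exact HP].
Qed.

Lemma P_eventually_pos_and_small : b <> 0 ->
  exists s3, s1 <= s3 /\ forall s, s3 <= s -> 0 < P s /\ Rabs ((k - 1) * P s) < Rabs b / 2.
Proof.
intros Hb.
assert (Hbpos : 0 < Rabs b) by now apply Rabs_pos_lt.
pose proof (Rabs_pos (k - 1)).
destruct (P_eventually_lt (Rabs b / (2 * (Rabs (k - 1) + 1)))) as [s3 [Hs3 HP]].
{ apply Rdiv_lt_0_compat; lra. }
exists s3. split; [exact Hs3|]. intros s Hs.
assert (HPs : 0 < P s) by (apply P_pos_after; lra).
split; [exact HPs|].
specialize (HP s Hs).
rewrite Rabs_mult, (Rabs_right (P s)) by lra.
assert (Hscale : Rabs b / (2 * (Rabs (k - 1) + 1)) * (Rabs (k - 1) + 1) = Rabs b / 2)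
  by (field; lra).
nra.
Qed.

Let WP' s := - c * W s * (W s * P s - a / c) + W s * P s * (b - (k - 1) * P s).

Lemma WP_deriv s : is_derive (fun s => W s * P s) s (WP' s).
Proof.
replace (WP' s) with (W s * P s * P s + W s * P' s) by (unfold WP', P'; field; lra).
apply (is_derive_mult W P); [apply W_deriv|apply P_deriv|intros; apply Rmult_comm].
Qed.

Lemma WP_eventually_lt : b < 0 ->
  exists s0, forall s, s0 <= s -> W s * P s < a / c.
Proof.
intros Hb.
destruct (P_eventually_pos_and_small (Rlt_not_eq _ _ Hb)) as [s3 [Hs3 Hsmall]].
assert (Hfactor : forall s, s3 <= s -> 0 < W s * P s /\ b - (k - 1) * P s < b / 2).
{ intros s Hs. destruct (Hsmall s Hs) as [HPs Habs].
  rewrite (Rabs_left b) in Habs by lra. apply Rabs_lt_between in Habs.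
  pose proof (W_pos s). split; [nra|lra]. }
destruct (eventually_lt_of_derive_neg_at_level _ WP' s3 (a / c) WP_deriv) as [s0 [_ HWP]].
- intros x Hx Hlevel. destruct (Hfactor x Hx). unfold WP'.
  replace (W x * P x - a / c) with 0 by lra. nra.
- intros Habove. exists (- (a / c * b / 2)). split.
  + assert (0 < a / c) by (apply Rdiv_lt_0_compat; lra). nra.
  + intros x Hx. specialize (Habove x Hx). destruct (Hfactor x Hx). pose proof (W_pos x).
    assert (0 <= c * W x * (W x * P x - a / c)) by (apply Rmult_le_pos; nra).
    unfold WP'. nra.
- exists s0. exact HWP.
Qed.

(* Below the level, [W P] increases, so [W P >= W P (s3) > 0] provides the rate. *)
Lemma WP_eventually_gt : 0 < b ->
  exists s0, forall s, s0 <= s -> a / c < W s * P s.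
Proof.
intros Hb.
destruct (P_eventually_pos_and_small (Rgt_not_eq _ _ Hb)) as [s3 [Hs3 Hsmall]].
assert (Hfactor : forall s, s3 <= s -> 0 < W s * P s /\ b / 2 < b - (k - 1) * P s).
{ intros s Hs. destruct (Hsmall s Hs) as [HPs Habs].
  rewrite (Rabs_right b) in Habs by lra. apply Rabs_lt_between in Habs.
  pose proof (W_pos s). split; [nra|lra]. }
assert (Hbelow_rate : forall s, s3 <= s -> W s * P s <= a / c -> W s * P s * (b / 2) <= WP' s).
{ intros s Hs Hle. destruct (Hfactor s Hs). pose proof (W_pos s). unfold WP'.
  assert (0 <= - c * W s * (W s * P s - a / c)) by (assert (0 < c * W s) by nra; nra). nra. }
destruct (eventually_lt_of_derive_neg_at_level (fun s => - (W s * P s)) (fun s => - WP' s)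
  s3 (- (a / c))) as [s0 [_ HWP]].
- intros x. apply (is_derive_opp (fun s => W s * P s)), WP_deriv.
- intros x Hx Hlevel. destruct (Hfactor x Hx). unfold WP'.
  replace (W x * P x - a / c) with 0 by lra. nra.
- intros Hbelow.
  assert (Hmono : forall x, s3 <= x -> W s3 * P s3 <= W x * P x).
  { intros x Hx. assert (W s3 * P s3 + 0 * (x - s3) <= W x * P x); [|lra].
    apply (affine_lower_bound (fun s => W s * P s) WP'); [exact WP_deriv| |exact Hx].
    intros y Hy. specialize (Hbelow y Hy). destruct (Hfactor y Hy).
    pose proof (Hbelow_rate y Hy ltac:(lra)). nra. }
  destruct (Hfactor s3 (Rle_refl _)) as [HWP3 _].
  exists (W s3 * P s3 * (b / 2)). split; [nra|].
  intros x Hx. specialize (Hbelow x Hx). pose proof (Hmono x Hx). destruct (Hfactor x Hx).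
  pose proof (Hbelow_rate x Hx ltac:(lra)). nra.
- exists s0. intros s Hs. specialize (HWP s Hs). lra.
Qed.

End LogSlopeSystem.

Ltac fold_eta f := try change (fun x : R => f x) with f in *;
  try change (fun x : R => Derive f x) with (Derive f) in *.

Lemma w_of_pos m v s : 0 < w_of m v s.
Proof. apply Rmult_lt_0_compat; [apply pow_lt, exp_pos|apply exp_pos]. Qed.

Definition w_log_slope (m : R) (v : R -> R) (s : R) : R :=
  2 + (1 - m) * (exp s * Derive v (exp s) / v (exp s)).

Section RadialProfile.

Variables (m : R) (v : R -> R).
Hypothesis v_pos : forall r, 0 < v r.
Hypothesis v_derivable : forall r, ex_derive v r.

Lemma v_neq0 r : v r <> 0.
Proof. apply Rgt_not_eq, v_pos. Qed.

Lemma Derive_Rpower_v t :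
  Derive (fun t => Rpower (v t) m) t = Rpower (v t) m * m * Derive v t / v t.
Proof.
apply is_derive_unique. unfold Rpower. auto_derive; fold_eta v.
- split; auto.
- field. apply v_neq0.
Qed.

Lemma is_derive_w_of s : is_derive (w_of m v) s (w_of m v s * w_log_slope m v s).
Proof.
unfold w_of, w_log_slope, Rpower. auto_derive; fold_eta v.
- repeat split; auto.
- field. apply v_neq0.
Qed.

Lemma Derive_h_of (n : nat) (beta : R) s :
  Derive (h_of n m beta v) s =
    w_of m v s * w_log_slope m v s
    - 2 * (INR n - 1) * (INR n - 2 - INR n * m) / ((1 - m) * beta).
Proof.
apply is_derive_unique. unfold h_of.
set (C := 2 * (INR n - 1) * (INR n - 2 - INR n * m) / ((1 - m) * beta)).
replace (w_of m v s * w_log_slope m v s - C) with (w_of m v s * w_log_slope m v s - C * 1)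
  by ring.
apply (is_derive_minus (w_of m v) (fun s => C * s)); [apply is_derive_w_of|].
apply is_derive_scal. exact (is_derive_id (K := R_AbsRing) s).
Qed.

Hypothesis v'_derivable : forall r, ex_derive (Derive v) r.

Lemma Derive2_Rpower_v t :
  Derive (Derive (fun t => Rpower (v t) m)) t =
    Rpower (v t) m * m * ((m - 1) * (Derive v t / v t) ^ 2 + Derive (Derive v) t / v t).
Proof.
rewrite (Derive_ext _ (fun t => Rpower (v t) m * m * Derive v t / v t)) by apply Derive_Rpower_v.
apply is_derive_unique. unfold Rpower. auto_derive; fold_eta v.
- repeat split; auto; apply v_neq0.
- field. apply v_neq0.
Qed.

Lemma w_log_slope_pos_near_origin : exists s1, 0 < w_log_slope m v s1.
Proof.
set (g := fun r => 2 + (1 - m) * (r * Derive v r / v r)).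
destruct (locally_gt_of_continuity_pt g 0 0) as [d [Hd Hg]].
- apply (continuity_pt_of_is_derive g 0 (Derive g 0)), Derive_correct.
  unfold g. auto_derive. repeat split; auto; apply v_neq0.
- unfold g. rewrite Rmult_0_l, Rdiv_0_l. lra.
- exists (ln (d / 2)). unfold w_log_slope. rewrite exp_ln by lra.
  apply (Hg (d / 2)). rewrite Rminus_0_r, Rabs_right; lra.
Qed.

End RadialProfile.

Lemma is_derive_w_log_slope (n : nat) (m beta lambda : R) (v : R -> R) :
  (3 <= n)%nat -> 0 < m -> m < 1 -> radial_solution n m beta lambda v ->
  forall s, is_derive (w_log_slope m v) s
    (2 * (INR n - 2 - INR n * m) / (1 - m)
     + ((INR n + 2) * m - (INR n - 2)) / (1 - m) * w_log_slope m v s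
     - m / (1 - m) * w_log_slope m v s ^ 2
     - beta / (INR n - 1) * w_of m v s * w_log_slope m v s).
Proof.
intros Hn Hm0 Hm1 [_ [Hp [Hd [Hd2 [_ [_ Hode]]]]]] s.
assert (HN : 3 <= INR n) by (replace 3 with (INR 3) by (simpl; lra); now apply le_INR).
specialize (Hode (exp s) (exp_pos s)).
rewrite (Derive2_Rpower_v m v Hp Hd Hd2), (Derive_Rpower_v m v Hp Hd) in Hode.
pose proof (Hp (exp s)) as HV.
assert (HX : 0 < Rpower (v (exp s)) m) by (unfold Rpower; apply exp_pos).
assert (HW : Rpower (v (exp s)) (1 - m) = v (exp s) / Rpower (v (exp s)) m).
{ assert (Hsplit : Rpower (v (exp s)) m * Rpower (v (exp s)) (1 - m) = v (exp s)).
  { rewrite <- Rpower_plus. replace (m + (1 - m)) with 1 by ring. now apply Rpower_1. }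
  apply (Rmult_eq_reg_l (Rpower (v (exp s)) m)); [|lra]. rewrite Hsplit. field. lra. }
unfold w_log_slope, w_of. auto_derive; fold_eta v.
{ repeat split; auto; lra. }
rewrite HW.
set (D2 := Derive (Derive v) (exp s)) in *.
set (D := Derive v (exp s)) in *.
set (V := v (exp s)) in *.
set (X := Rpower V m) in *.
set (r := exp s) in *.
set (N := INR n) in *.
assert (Hr : 0 < r) by apply exp_pos.
assert (Hv'' : D2 = V / ((N - 1) * X) * (- 2 * beta / (1 - m) * V - beta * r * D)
                    - (m - 1) * D ^ 2 / V - (N - 1) * D / r).
{ apply Rminus_diag_uniq. rewrite <- (Rmult_0_r (V / ((N - 1) * X))), <- Hode.
  field. repeat split; lra. }
rewrite Hv''. field. repeat split; lra.
Qed.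

Theorem corollary2p4 (n : nat) (m beta lambda : R) (v : R -> R) :
  (3 <= n)%nat ->
  0 < m -> m < (INR n - 2) / INR n ->
  m <> (INR n - 2) / (INR n + 2) ->
  0 < beta -> 0 < lambda ->
  radial_solution n m beta lambda v ->
  exists s0 : R,
    (m < (INR n - 2) / (INR n + 2) ->
       forall s, s0 <= s -> Derive (h_of n m beta v) s < 0) /\
    ((INR n - 2) / (INR n + 2) < m ->
       forall s, s0 <= s -> Derive (h_of n m beta v) s > 0).
Proof.
intros Hn Hm0 Hmn Hm_crit Hbeta _ Hrad.
pose proof Hrad as [_ [Hv_pos [Hv_der [Hv'_der _]]]].
assert (HN : 3 <= INR n) by (replace 3 with (INR 3) by (simpl; lra); now apply le_INR).
assert (Hnm : INR n * m < INR n - 2)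
  by (assert ((INR n - 2) / INR n * INR n = INR n - 2) by (field; lra); nra).
assert (Hm1 : m < 1) by nra.
set (W := w_of m v). set (P := w_log_slope m v).
set (a := 2 * (INR n - 2 - INR n * m) / (1 - m)).
set (b := ((INR n + 2) * m - (INR n - 2)) / (1 - m)).
set (k := m / (1 - m)). set (c := beta / (INR n - 1)).
assert (Ha : 0 < a) by (apply Rdiv_lt_0_compat; lra).
assert (Hk : 0 < k) by (apply Rdiv_lt_0_compat; lra).
assert (Hc : 0 < c) by (apply Rdiv_lt_0_compat; lra).
pose proof (w_of_pos m v) as HW.
pose proof (is_derive_w_of m v Hv_pos Hv_der) as HW'.
pose proof (is_derive_w_log_slope n m beta lambda v Hn Hm0 Hm1 Hrad) as HP'.
destruct (w_log_slope_pos_near_origin m v Hv_pos Hv_der Hv'_der) as [s1 Hs1].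
assert (Hh' : forall s, Derive (h_of n m beta v) s = W s * P s - a / c).
{ intros s. rewrite Derive_h_of by assumption. unfold W, P, a, c. field. lra. }
assert (Hcrit : (INR n - 2) / (INR n + 2) * (INR n + 2) = INR n - 2) by (field; lra).
destruct (Rtotal_order m ((INR n - 2) / (INR n + 2))) as [Hlt|[Heq|Hgt]];
  [|contradiction|].
- destruct (WP_eventually_lt W P a b k c Ha Hk Hc HW HW' HP' s1 Hs1) as [s0 Hs0].
  { apply Rdiv_neg_pos; nra. }
  exists s0. split; [|lra]. intros _ s Hs. rewrite Hh'. specialize (Hs0 s Hs). lra.
- destruct (WP_eventually_gt W P a b k c Ha Hk Hc HW HW' HP' s1 Hs1) as [s0 Hs0].
  { apply Rdiv_lt_0_compat; nra. }
  exists s0. split; [lra|]. intros _ s Hs. rewrite Hh'. specialize (Hs0 s Hs). lra.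
Qed.
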